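(* Let $G_l$ be a graph of order $n_l$, maximum degree $\Delta_l$ and minimum degree $\delta_l$, $l\in\{1,2\}$. Then: (i) For $i,j\in\{1,2\}$ with $i\neq j$ and every integer $k\in\{\Delta_j-\Delta_i,\dots,\Delta_i+\Delta_j-2\}$, $\phi_k^p(G_1\times G_2)\ge n_j\,\phi_{k-\Delta_j}^p(G_i)$. (ii) For all integers $k_1\in\{1-\delta_1,\dots,\Delta_1-2\}$ and $k_2\in\{1-\delta_2,\dots,\Delta_2-2\}$ and every integer $k\in\{k_1+k_2-1,\dots,\Delta_1+\Delta_2-2\}$, $$\phi_k^p(G_1\times G_2)\ge \phi_{k_1}^p(G_1)\phi_{k_2}^p(G_2)+\min\{n_1-\phi_{k_1}^p(G_1),\,n_2-\phi_{k_2}^p(G_2)\}.$$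
   Context: All graphs are finite and simple. For a graph $G=(V,E)$, a set $S\subseteq V$ and $v\in V$, let $\delta_S(v)=|\{u\in S: uv\in E\}|$, $\overline{S}=V\setminus S$, and let $\partial S$ be the set of vertices of $\overline S$ adjacent to at least one vertex of $S$. For an integer $k$, a non-empty set $S\subseteq V$ is a defensive $k$-alliance if $\delta_S(v)\ge \delta_{\overline S}(v)+k$ for every $v\in S$; an offensive $k$-alliance if $\delta_S(v)\ge \delta_{\overline S}(v)+k$ for every $v\in\partial S$; and a powerful $k$-alliance if it is both a defensive $k$-alliance and an offensive $(k+2)$-alliance. A set $X\subseteq V$ is a powerful $k$-alliance free set ($k$-paf set) if no powerful $k$-alliance $S$ satisfies $S\subseteq X$. $\phi_k^p(G)$ denotes the maximum cardinality of a $k$-paf set in $G$. The Cartesian product $G_1\times G_2$ of $G_1=(V_1,E_1)$, $G_2=(V_2,E_2)$ has vertex set $V_1\times V_2$, with $(a,b)$ adjacent to $(c,d)$ iff either $a=c$ and $bd\in E_2$, or $b=d$ and $ac\in E_1$. *)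

From mathcomp Require Import all_boot all_order all_algebra.
Set Implicit Arguments. Unset Strict Implicit. Unset Printing Implicit Defensive.
Import GRing.Theory Num.Theory.

Definition simple_graph (T : finType) (e : rel T) : Prop :=
  symmetric e /\ irreflexive e.

Definition deg_in (T : finType) (e : rel T) (S : {set T}) (v : T) : nat :=
  #|[set u in S | e v u]|.

Definition deg (T : finType) (e : rel T) (v : T) : nat := #|[set u | e v u]|.

Definition maxdeg (T : finType) (e : rel T) : nat := \max_(v : T) deg e v.
(* minimum degree; the seed #|T| is never attained for nonempty T, and gives 0 for empty T *)
Definition mindeg (T : finType) (e : rel T) : nat := \big[minn/#|T|]_(v : T) deg e v.

Definition boundary (T : finType) (e : rel T) (S : {set T}) : {set T} :=
  [set v in ~: S | [exists u in S, e v u]].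

Definition defensive_alliance (T : finType) (e : rel T) (k : int) (S : {set T}) : bool :=
  (S != set0) &&
  [forall v in S, ((deg_in e (~: S) v)%:Z + k <= (deg_in e S v)%:Z)%R].

Definition offensive_alliance (T : finType) (e : rel T) (k : int) (S : {set T}) : bool :=
  (S != set0) &&
  [forall v in boundary e S, ((deg_in e (~: S) v)%:Z + k <= (deg_in e S v)%:Z)%R].

Definition powerful_alliance (T : finType) (e : rel T) (k : int) (S : {set T}) : bool :=
  defensive_alliance e k S && offensive_alliance e (k + 2)%R S.

Definition paf_set (T : finType) (e : rel T) (k : int) (X : {set T}) : bool :=
  [forall S : {set T}, (S \subset X) ==> ~~ powerful_alliance e k S].

(* phi_k^p(G): maximum cardinality of a k-paf set (the empty set is always k-paf) *)
Definition phi_p (T : finType) (e : rel T) (k : int) : nat :=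
  \max_(X : {set T} | paf_set e k X) #|X|.

Definition cart_rel (T1 T2 : finType) (e1 : rel T1) (e2 : rel T2) : rel (T1 * T2) :=
  fun x y => ((x.1 == y.1) && e2 x.2 y.2) || ((x.2 == y.2) && e1 x.1 y.1).

From mathcomp Require Import all_boot all_order all_algebra zify.
Import Order.TTheory GRing.Theory Num.Theory.
Set Implicit Arguments. Unset Strict Implicit. Unset Printing Implicit Defensive.

(* All alliance conditions are phrased through the margin of a vertex v with
   respect to S, margin S v = delta_S(v) - delta_{~S}(v): S is a powerful
   k-alliance iff it is non-empty, every v in S has margin >= k and every v in
   its boundary has margin >= k + 2.  In G1 x G2 the margin is additive over
   the two fibres through a vertex (margin_cart).  The proof rests on two facts:
   - Pulling back along a graph homomorphism f turns a powerful k-alliance S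
     into a powerful (k - c)-alliance f^-1(S) whenever margins drop by at most
     c (powerful_preim).  Applied to the fibre embeddings, each non-empty fibre
     of a powerful k-alliance of G1 x G2 is a powerful (k - Delta)-alliance of
     the factor, which gives (i): X x V2 is k-paf whenever X is
     (k - Delta2)-paf in G1.
   - For (ii) take maximum paf sets X1, X2 and add to X1 x X2 a matching M
     between their complements.  A defensive alliance cannot meet M, since a
     vertex of M is isolated in both of its fibres (defensive_avoids_matching);
     and a powerful alliance inside X1 x X2 either projects onto a powerful
     k1-alliance of G1 or has a column that is a powerful k2-alliance of G2
     (powerful_cart_proj). *)

Local Open Scope ring_scope.

Definition margin (T : finType) (e : rel T) (S : {set T}) (v : T) : int :=
  (deg_in e S v)%:Z - (deg_in e (~: S) v)%:Z.

Section Margin.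
Variables (T : finType) (e : rel T).

Lemma deg_in_split (S : {set T}) v : (deg_in e S v + deg_in e (~: S) v)%N = deg e v.
Proof.
rewrite /deg_in /deg -(cardsID S [set u | e v u]); congr (_ + _)%N.
  by apply: eq_card => u; rewrite !inE andbC.
by apply: eq_card => u; rewrite !inE.
Qed.

Lemma margin_le_deg (S : {set T}) v : margin e S v <= (deg e v)%:Z.
Proof. rewrite /margin -(deg_in_split S v); lia. Qed.

Lemma margin_isolated (S : {set T}) v :
  deg_in e S v = 0%N -> margin e S v = - (deg e v)%:Z.
Proof. move=> dS; rewrite /margin -(deg_in_split S v) dS; lia. Qed.

Lemma deg_in_mono (R R' : {set T}) v : R \subset R' -> (deg_in e R v <= deg_in e R' v)%N.
Proof.
move=> sRR'; apply: subset_leq_card; apply/subsetP=> u; rewrite !inE.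
by case/andP=> /(subsetP sRR') -> ->.
Qed.

Lemma margin_mono (R R' : {set T}) v : R \subset R' -> margin e R v <= margin e R' v.
Proof.
move=> sRR'; have := deg_in_mono v sRR'.
have := @deg_in_mono (~: R') (~: R) v; rewrite setCS sRR' /margin => /(_ isT); lia.
Qed.

Lemma margin_set0 v : margin e set0 v = - (deg e v)%:Z.
Proof.
apply: margin_isolated; apply/eqP; rewrite cards_eq0 -subset0.
by apply/subsetP=> u; rewrite !inE.
Qed.

Lemma margin_set1 v : irreflexive e -> margin e [set v] v = - (deg e v)%:Z.
Proof.
move=> irr; apply: margin_isolated; apply/eqP; rewrite cards_eq0 -subset0.
by apply/subsetP=> u; rewrite !inE => /andP[/eqP -> evv]; rewrite irr in evv.
Qed.

End Margin.

Lemma deg_le_maxdeg (T : finType) (e : rel T) v : (deg e v <= maxdeg e)%N.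
Proof. exact: leq_bigmax. Qed.

Lemma mindeg_le_deg (T : finType) (e : rel T) v : (mindeg e <= deg e v)%N.
Proof. exact: (@Order.TotalTheory.bigmin_le _ nat T #|T| v (deg e)). Qed.

Section Alliances.
Variables (T : finType) (e : rel T).

Lemma powerfulP (k : int) (S : {set T}) :
  reflect [/\ S != set0, {in S, forall v, k <= margin e S v}
            & {in boundary e S, forall v, k + 2 <= margin e S v}]
          (powerful_alliance e k S).
Proof.
rewrite /powerful_alliance /defensive_alliance /offensive_alliance.
apply: (iffP idP) => [/andP[/andP[S0 /forallP dS] /andP[_ /forallP oS]] | [S0 dS oS]].
  split=> // v vS; rewrite /margin lerBrDl; first exact: implyP (dS v) vS.
  exact: implyP (oS v) vS.
rewrite S0; apply/andP; split; apply/forallP=> v; apply/implyP=> vS; rewrite -lerBrDl.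
  exact: dS.
exact: oS.
Qed.

Lemma powerful_mono (k k' : int) (S : {set T}) :
  k <= k' -> powerful_alliance e k' S -> powerful_alliance e k S.
Proof.
move=> lekk' /powerfulP[S0 dS oS]; apply/powerfulP; split=> // v vS.
  exact: le_trans lekk' (dS v vS).
by apply: le_trans (oS v vS); rewrite lerD2r.
Qed.

Lemma pafP (k : int) (X : {set T}) :
  reflect (forall S : {set T}, S \subset X -> ~~ powerful_alliance e k S) (paf_set e k X).
Proof.
apply: (iffP forallP) => [pX S sSX | pX S]; first exact: implyP (pX S) sSX.
by apply/implyP; exact: pX.
Qed.

Lemma phi_ge (k : int) (X : {set T}) : paf_set e k X -> (#|X| <= phi_p e k)%N.
Proof. exact: (@leq_bigmax_cond _ (paf_set e k) (fun X : {set T} => #|X|)). Qed.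

Lemma phi_attained (k : int) : exists2 X, paf_set e k X & #|X| = phi_p e k.
Proof.
have paf0 : paf_set e k set0.
  by apply/pafP=> S; rewrite subset0 => /eqP ->; apply/powerfulP=> -[]; rewrite eqxx.
have [|X pX maxX] := eq_bigmax_cond (fun X : {set T} => #|X|) (A := paf_set e k).
  by apply/card_gt0P; exists set0.
by exists X => //; rewrite maxX.
Qed.

End Alliances.

Section Homomorphism.
Variables (T T' : finType) (e : rel T) (e' : rel T') (f : T -> T').
Hypothesis f_hom : forall x y, e x y -> e' (f x) (f y).

Lemma boundary_preim (S : {set T'}) :
  boundary e (f @^-1: S) \subset f @^-1: boundary e' S.
Proof.
apply/subsetP=> x; rewrite !inE => /andP[fxS /existsP[y /andP[fyS exy]]].
rewrite inE in fyS.
by rewrite fxS; apply/existsP; exists (f y); rewrite fyS f_hom.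
Qed.

Lemma powerful_preim (c k : int) (S : {set T'}) :
  (forall x, margin e' S (f x) <= margin e (f @^-1: S) x + c) ->
  f @^-1: S != set0 -> powerful_alliance e' k S ->
  powerful_alliance e (k - c) (f @^-1: S).
Proof.
move=> le_margin R0 /powerfulP[_ dS oS]; apply/powerfulP; split=> // x xR.
  by rewrite inE in xR; have := dS _ xR; have := le_margin x; lia.
have := subsetP (boundary_preim S) x xR; rewrite inE => /oS.
have := le_margin x; lia.
Qed.

End Homomorphism.

Lemma mem_zip_index (S T : eqType) (s : seq S) (t : seq T) x y :
  uniq s -> uniq t -> (x, y) \in zip s t ->
  [/\ x \in s, y \in t & index x s = index y t].
Proof.
elim: s t => [|a s IH] [|b t] //= /andP[as_ us] /andP[bt ut].
rewrite in_cons => /orP[/eqP[-> ->] | xy]; first by rewrite !in_cons !eqxx.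
have [xs yt ixy] := IH _ us ut xy.
have ax : a != x by apply: contraNneq as_ => ->.
have bY : b != y by apply: contraNneq bt => ->.
by rewrite !in_cons xs yt !orbT (negbTE ax) (negbTE bY) ixy.
Qed.

(* M is a matching: distinct pairs of M differ in both coordinates. *)
Definition matching (T1 T2 : finType) (M : {set T1 * T2}) : Prop :=
  {in M &, forall p q, (p.1 == q.1) = (p.2 == q.2)}.

Lemma matching_exists (T1 T2 : finType) (A : {set T1}) (B : {set T2}) :
  exists2 M : {set T1 * T2}, M \subset setX A B & matching M /\ #|M| = minn #|A| #|B|.
Proof.
have [uA uB] := (enum_uniq (mem A), enum_uniq (mem B)).
exists [set p in zip (enum A) (enum B)]; last split.
- apply/subsetP=> -[x y]; rewrite !inE => /(mem_zip_index uA uB)[xA yB _].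
  by move: xA yB; rewrite !mem_enum => -> ->.
- move=> [x y] [x' y']; rewrite !inE /= => /(mem_zip_index uA uB)[xA yB ixy].
  case/(mem_zip_index uA uB)=> xA' yB' ixy'.
  rewrite -(inj_in_eq (@index_inj _ x (enum A))) //.
  by rewrite -[RHS](inj_in_eq (@index_inj _ y (enum B))) // ixy ixy'.
- by rewrite cardsE (card_uniqP (zip_uniql _ uA)) size_zip -!cardE.
Qed.

Definition row (T1 T2 : finType) (S : {set T1 * T2}) (b : T2) : {set T1} :=
  (fun a => (a, b)) @^-1: S.
Definition col (T1 T2 : finType) (S : {set T1 * T2}) (a : T1) : {set T2} :=
  (fun b => (a, b)) @^-1: S.

Section CartesianProduct.
Variables (T1 T2 : finType) (e1 : rel T1) (e2 : rel T2).
Hypotheses (irr1 : irreflexive e1) (irr2 : irreflexive e2).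
Local Notation G := (cart_rel e1 e2).

Lemma deg_in_cart (S : {set T1 * T2}) a b :
  deg_in G S (a, b) = (deg_in e1 (row S b) a + deg_in e2 (col S a) b)%N.
Proof.
rewrite /deg_in -(cardsID [set u : T1 * T2 | u.2 == b]).
have -> : [set u in S | G (a, b) u] :&: [set u : T1 * T2 | u.2 == b]
   = (fun x => (x, b)) @: [set x in row S b | e1 a x].
  apply/setP=> -[x y]; rewrite !inE /cart_rel /=; apply/idP/imsetP.
    case/andP=> /andP[xyS adj] /eqP yb; subst y.
    rewrite irr2 andbF eqxx /= in adj.
    by exists x; rewrite // !inE xyS adj.
  by case=> x'; rewrite !inE => /andP[xS eax] [-> ->]; rewrite xS eqxx eax orbT.
have -> : [set u in S | G (a, b) u] :\: [set u : T1 * T2 | u.2 == b]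
   = (fun y => (a, y)) @: [set y in col S a | e2 b y].
  apply/setP=> -[x y]; rewrite !inE /cart_rel /=; apply/idP/imsetP.
    case/andP=> yb /andP[xyS]; rewrite [b == y]eq_sym (negbTE yb) orbF.
    by case/andP=> /eqP ax eby; subst x; exists y; rewrite // !inE xyS eby.
  case=> y'; rewrite !inE => /andP[yS eby] [-> ->].
  have yb : y' != b by apply: contraTneq eby => ->; rewrite irr2.
  by rewrite yb yS eqxx eby.
by rewrite !card_imset // => u v [].
Qed.

Lemma margin_cart (S : {set T1 * T2}) a b :
  margin G S (a, b) = margin e1 (row S b) a + margin e2 (col S a) b.
Proof.
by rewrite /margin !deg_in_cart /row /col !preimsetC !PoszD opprD addrACA.
Qed.

Lemma row_hom b x y : e1 x y -> G (x, b) (y, b).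
Proof. by move=> exy; rewrite /cart_rel /= eqxx exy orbT. Qed.

Lemma col_hom a x y : e2 x y -> G (a, x) (a, y).
Proof. by move=> exy; rewrite /cart_rel /= eqxx exy. Qed.

Lemma powerful_row (k : int) (S : {set T1 * T2}) b :
  row S b != set0 -> powerful_alliance G k S ->
  powerful_alliance e1 (k - (maxdeg e2)%:Z) (row S b).
Proof.
have le_margin x : margin G S (x, b) <= margin e1 (row S b) x + (maxdeg e2)%:Z.
  by rewrite margin_cart; have := margin_le_deg e2 (col S x) b;
     have := deg_le_maxdeg e2 b; lia.
exact: (powerful_preim (f := pair^~ b) (@row_hom b) le_margin).
Qed.

Lemma powerful_col (k : int) (S : {set T1 * T2}) a :
  col S a != set0 -> powerful_alliance G k S ->
  powerful_alliance e2 (k - (maxdeg e1)%:Z) (col S a).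
Proof.
have le_margin y : margin G S (a, y) <= margin e2 (col S a) y + (maxdeg e1)%:Z.
  by rewrite margin_cart; have := margin_le_deg e1 (row S y) a;
     have := deg_le_maxdeg e1 a; lia.
exact: (powerful_preim (f := pair a) (@col_hom a) le_margin).
Qed.

Lemma paf_setX_row (k : int) (X : {set T1}) :
  paf_set e1 (k - (maxdeg e2)%:Z) X -> paf_set G k (setX X [set: T2]).
Proof.
move=> /pafP pafX; apply/pafP=> S sSX; apply/negP=> pS.
case/powerfulP: (pS) => /set0Pn[[a b] abS] _ _.
apply: (negP (pafX (row S b) _)) (powerful_row _ pS).
  by apply/subsetP=> x; rewrite inE => /(subsetP sSX); rewrite inE => /andP[].
by apply/set0Pn; exists a; rewrite inE.
Qed.

Lemma paf_setX_col (k : int) (X : {set T2}) :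
  paf_set e2 (k - (maxdeg e1)%:Z) X -> paf_set G k (setX [set: T1] X).
Proof.
move=> /pafP pafX; apply/pafP=> S sSX; apply/negP=> pS.
case/powerfulP: (pS) => /set0Pn[[a b] abS] _ _.
apply: (negP (pafX (col S a) _)) (powerful_col _ pS).
  by apply/subsetP=> y; rewrite inE => /(subsetP sSX); rewrite inE => /andP[].
by apply/set0Pn; exists b; rewrite inE.
Qed.

Lemma phi_cart_row (k : int) :
  (#|T2| * phi_p e1 (k - (maxdeg e2)%:Z) <= phi_p G k)%N.
Proof.
have [X pafX <-] := phi_attained e1 (k - (maxdeg e2)%:Z).
by rewrite mulnC -cardsT -cardsX; apply/phi_ge/paf_setX_row.
Qed.

Lemma phi_cart_col (k : int) :
  (#|T1| * phi_p e2 (k - (maxdeg e1)%:Z) <= phi_p G k)%N.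
Proof.
have [X pafX <-] := phi_attained e2 (k - (maxdeg e1)%:Z).
by rewrite -cardsT -cardsX; apply/phi_ge/paf_setX_col.
Qed.

Lemma margin_cart_isolated (S : {set T1 * T2}) a b :
  row S b \subset [set a] -> col S a \subset [set b] ->
  margin G S (a, b) <= - (mindeg e1 + mindeg e2)%:Z.
Proof.
move=> /(margin_mono e1 a) rowS /(margin_mono e2 b) colS.
move: rowS colS; rewrite margin_cart !margin_set1 //.
by have := mindeg_le_deg e1 a; have := mindeg_le_deg e2 b; lia.
Qed.

(* A defensive k-alliance inside (X1 x X2) + M, with k > -(delta1 + delta2)
   and M a matching of the complements, lies in X1 x X2: its vertices in M
   would be alone in both fibres. *)
Lemma defensive_avoids_matching (k : int) (X1 : {set T1}) (X2 : {set T2})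
    (M S : {set T1 * T2}) :
  M \subset setX (~: X1) (~: X2) -> matching M ->
  1 - (mindeg e1 + mindeg e2)%:Z <= k -> {in S, forall v, k <= margin G S v} ->
  S \subset setX X1 X2 :|: M -> S \subset setX X1 X2.
Proof.
move=> sMX matchM hk dS sSY; apply/subsetP=> -[a b] abS.
have /setUP[// | abM] := subsetP sSY _ abS.
have := subsetP sMX _ abM; rewrite !inE => /andP[aX1 bX2].
have rowS : row S b \subset [set a].
  apply/subsetP=> x; rewrite !inE => xbS.
  have /setUP[| xbM] := subsetP sSY _ xbS; first by rewrite inE (negbTE bX2) andbF.
  by rewrite (matchM _ _ xbM abM) /=.
have colS : col S a \subset [set b].
  apply/subsetP=> y; rewrite !inE => ayS.
  have /setUP[| ayM] := subsetP sSY _ ayS; first by rewrite inE (negbTE aX1).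
  by rewrite -(matchM _ _ ayM abM) /=.
by have := dS _ abS; have := margin_cart_isolated rowS colS; lia.
Qed.

Lemma row_sub_proj (S : {set T1 * T2}) b : row S b \subset fst @: S.
Proof. by apply/subsetP=> x; rewrite inE => xbS; apply/imsetP; exists (x, b). Qed.

(* A boundary vertex a' of the projection A of S gives a boundary vertex
   (a', b) of S whose column is empty, so margin_A(a') >= k + 2 + delta2. *)
Lemma proj_boundary_margin (k : int) (S : {set T1 * T2}) a' :
  {in boundary G S, forall v, k + 2 <= margin G S v} ->
  a' \in boundary e1 (fst @: S) ->
  k + 2 + (mindeg e2)%:Z <= margin e1 (fst @: S) a'.
Proof.
move=> oS; rewrite inE in_setC.
case/andP=> a'A /exists_inP[_ /imsetP[[a b] abS ->] ea'a].
have a'_row : a' \in boundary e1 (row S b).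
  rewrite inE in_setC; apply/andP; split.
    by apply: contraNN a'A; rewrite inE => a'bS; apply/imsetP; exists (a', b).
  by apply/exists_inP; exists a; rewrite ?inE.
have col0 : col S a' = set0.
  apply/setP=> y; rewrite !inE; apply/negbTE; apply: contraNN a'A => a'yS.
  by apply/imsetP; exists (a', y).
have := subsetP (boundary_preim (@row_hom b) S) _ a'_row; rewrite inE => /oS.
rewrite margin_cart col0 margin_set0.
by have := margin_mono e1 a' (row_sub_proj S b); have := mindeg_le_deg e2 b; lia.
Qed.

(* Either the projection A of a powerful k-alliance S is a powerful
   k1-alliance of G1, or some a in A has margin_A(a) < k1, and then the column
   of S through a is a powerful k2-alliance of G2. *)
Lemma powerful_cart_proj (k1 k2 k : int) (S : {set T1 * T2}) :
  1 - (mindeg e2)%:Z <= k2 -> k1 + k2 - 1 <= k -> powerful_alliance G k S ->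
  powerful_alliance e1 k1 (fst @: S) \/
  exists2 a, a \in fst @: S & powerful_alliance e2 k2 (col S a).
Proof.
move=> hk2 hk pS; case/powerfulP: (pS) => S0 _ oS.
have [defA | /forall_inPn[a aA]] :=
  boolP [forall a in fst @: S, k1 <= margin e1 (fst @: S) a].
  left; apply/powerfulP; split; last by move=> a' /(proj_boundary_margin oS); lia.
    by rewrite imset_eq0.
  exact/forall_inP.
rewrite -ltNge => margin_a; right; exists a => //.
have le_margin y : margin G S (a, y) <= margin e2 (col S a) y + (k1 - 1).
  by rewrite margin_cart; have := margin_mono e1 a (row_sub_proj S y); lia.
have C0 : col S a != set0.
  by case/imsetP: aA => -[x y] xyS /= ->; apply/set0Pn; exists y; rewrite inE.
apply: powerful_mono (powerful_preim (f := pair a) (@col_hom a) le_margin C0 pS); lia.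
Qed.

Lemma paf_setX_matching (k1 k2 k : int) (X1 : {set T1}) (X2 : {set T2})
    (M : {set T1 * T2}) :
  1 - (mindeg e1)%:Z <= k1 -> 1 - (mindeg e2)%:Z <= k2 -> k1 + k2 - 1 <= k ->
  paf_set e1 k1 X1 -> paf_set e2 k2 X2 ->
  M \subset setX (~: X1) (~: X2) -> matching M ->
  paf_set G k (setX X1 X2 :|: M).
Proof.
move=> hk1 hk2 hk /pafP pafX1 /pafP pafX2 sMX matchM.
apply/pafP=> S sSY; apply/negP=> pS; case/powerfulP: (pS) => _ dS _.
have sSX : S \subset setX X1 X2.
  by apply: defensive_avoids_matching sMX matchM _ dS sSY; lia.
case: (powerful_cart_proj hk2 hk pS) => [pA | [a _ pC]].
  apply: (negP (pafX1 _ _)) pA; apply/subsetP=> _ /imsetP[[x y] xyS ->].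
  by have := subsetP sSX _ xyS; rewrite inE => /andP[].
apply: (negP (pafX2 _ _)) pC; apply/subsetP=> y; rewrite inE => ayS.
by have := subsetP sSX _ ayS; rewrite inE => /andP[].
Qed.

Lemma phi_cart_matching (k1 k2 k : int) :
  1 - (mindeg e1)%:Z <= k1 -> 1 - (mindeg e2)%:Z <= k2 -> k1 + k2 - 1 <= k ->
  (phi_p e1 k1 * phi_p e2 k2
     + minn (#|T1| - phi_p e1 k1) (#|T2| - phi_p e2 k2) <= phi_p G k)%N.
Proof.
move=> hk1 hk2 hk.
have [X1 pafX1 <-] := phi_attained e1 k1; have [X2 pafX2 <-] := phi_attained e2 k2.
have [M sMX [matchM cardM]] := matching_exists (~: X1) (~: X2).
have disjXM : setX X1 X2 :&: M = set0.
  apply/setP=> -[x y]; rewrite !inE; apply/negbTE/andP=> -[/andP[xX1 _] xyM].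
  by have := subsetP sMX _ xyM; rewrite !inE xX1.
have cardY : #|setX X1 X2 :|: M| =
    (#|X1| * #|X2| + minn (#|T1| - #|X1|) (#|T2| - #|X2|))%N.
  rewrite cardsU disjXM cards0 subn0 cardsX cardM.
  by have := cardsC X1; have := cardsC X2; lia.
rewrite -cardY; exact: phi_ge (paf_setX_matching hk1 hk2 hk pafX1 pafX2 sMX matchM).
Qed.

End CartesianProduct.

Local Close Scope ring_scope.

Theorem corollary5 (T1 T2 : finType) (e1 : rel T1) (e2 : rel T2)
  (G1s : simple_graph e1) (G2s : simple_graph e2) :
  (* (i) with i = 1, j = 2 *)
  (forall k : int,
     ((maxdeg e2)%:Z - (maxdeg e1)%:Z <= k)%R ->
     (k <= (maxdeg e1)%:Z + (maxdeg e2)%:Z - 2)%R ->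
     #|T2| * phi_p e1 (k - (maxdeg e2)%:Z)%R <= phi_p (cart_rel e1 e2) k) /\
  (* (i) with i = 2, j = 1 *)
  (forall k : int,
     ((maxdeg e1)%:Z - (maxdeg e2)%:Z <= k)%R ->
     (k <= (maxdeg e2)%:Z + (maxdeg e1)%:Z - 2)%R ->
     #|T1| * phi_p e2 (k - (maxdeg e1)%:Z)%R <= phi_p (cart_rel e1 e2) k) /\
  (* (ii) *)
  (forall k1 k2 k : int,
     (1 - (mindeg e1)%:Z <= k1)%R -> (k1 <= (maxdeg e1)%:Z - 2)%R ->
     (1 - (mindeg e2)%:Z <= k2)%R -> (k2 <= (maxdeg e2)%:Z - 2)%R ->
     (k1 + k2 - 1 <= k)%R -> (k <= (maxdeg e1)%:Z + (maxdeg e2)%:Z - 2)%R ->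
     phi_p e1 k1 * phi_p e2 k2
       + minn (#|T1| - phi_p e1 k1) (#|T2| - phi_p e2 k2)
     <= phi_p (cart_rel e1 e2) k).
Proof.
case: G1s G2s => [_ irr1] [_ irr2].
split; first by move=> k _ _; exact: (phi_cart_row _ irr2).
split; first by move=> k _ _; exact: (phi_cart_col _ irr2).
by move=> k1 k2 k hk1 _ hk2 _ hk _; exact: (phi_cart_matching irr1 irr2 hk1 hk2 hk).
Qed.
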